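(* For every $n\in\mathbb{N}$ and all words $A_1,A_2\in\mathsf{W}_\omega$ with $A_1\sim A_2$, we have $a_n(A_1)\sim a_n(A_2)$. Moreover, for all $n\in\mathbb{N}$, $A_1\in\mathsf{NF}$ and $A_2\in\mathsf{W}_\omega$ with $A_1\sim A_2$, we have $\Diamond_nA_1\sim a_n(A_2)$.
   Context: Words are finite strings over the alphabet $\mathbb{N}=\{0,1,2,\dots\}$; $\mathsf{W}_\omega$ is the set of all words, $\Lambda$ the empty word, $AB$ concatenation; $a_n\colon\mathsf{W}_\omega\to\mathsf{W}_\omega$ is $a_n(A)=An$. For $k\in\mathbb{N}$, $\mathsf{S}_k$ is the set of words all of whose symbols are $\ge k$. Given a linear preorder $\precsim$ with $A\sim B$ iff $A\precsim B\wedge B\precsim A$ and $A\prec B$ iff $A\precsim B\wedge\neg B\precsim A$, a finite sequence $(A_1,\dots,A_p)$ is lexicographically not greater than $(B_1,\dots,B_q)$ iff either $p\le q$ and $A_i\sim B_i$ for all $i\le p$, or there is $s<\min(p,q)$ with $A_i\sim B_i$ for $i\le s$ and $A_{s+1}\prec B_{s+1}$. A lexicographically maximal subsequence of a finite sequence is a subsequence that is lexicographically not less than every subsequence. The linear preorder $\precsim$ on $\mathsf{W}_\omega$ is defined by recursion on (largest symbol of $AB$) $-$ (smallest symbol of $AB$): $\Lambda\precsim\Lambda$; if $AB$ is nonempty with minimal symbol $n$, write uniquely $A=A_1n\cdots nA_k$, $B=B_1n\cdots nB_l$ ($k,l\ge1$) with $A_i,B_j\in\mathsf{S}_{n+1}$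 (possibly empty); let $C,D$ be lexicographically maximal subsequences of $(A_1,\dots,A_k)$, $(B_1,\dots,B_l)$; then $A\precsim B$ iff $C$ is lexicographically not greater than $D$. The set $\mathsf{NF}$: $\Lambda\in\mathsf{NF}$; a word with minimal symbol $n$, written $A_1n\cdots nA_k$ with $k\ge2$, $A_i\in\mathsf{S}_{n+1}$, is in $\mathsf{NF}$ iff $A_k\precsim\dots\precsim A_1$ and all $A_i\in\mathsf{NF}$. Every word is $\sim$-equivalent to exactly one word of $\mathsf{NF}$. For $A\in\mathsf{NF}$, $\Diamond_nA$ is the unique word of $\mathsf{NF}$ that is $\sim$-equivalent to $An$. *)

From mathcomp Require Import all_boot.
Set Implicit Arguments. Unset Strict Implicit. Unset Printing Implicit Defensive.

Definition a_ (n : nat) (A : seq nat) : seq nat := rcons A n.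

Definition minsym (s : seq nat) : nat := foldr minn (head 0 s) s.
Definition maxsym (s : seq nat) : nat := foldr maxn 0 s.

(* splitn n A = (A_1, ..., A_k) where A = A_1 n A_2 n ... n A_k and no A_i contains n *)
Definition splitn (n : nat) (A : seq nat) : seq (seq nat) :=
  foldr (fun x acc => if x == n then [::] :: acc
                      else match acc with
                           | h :: t => (x :: h) :: t
                           | [::] => [:: [:: x]]
                           end) [:: [::]] A.

Fixpoint lexle (le : seq nat -> seq nat -> Prop) (s t : seq (seq nat)) : Prop :=
  match s, t with
  | [::], _ => True
  | _ :: _, [::] => False
  | a :: s', b :: t' =>
      (le a b /\ ~ le b a) \/ (le a b /\ le b a /\ lexle le s' t')
  end.

Definition lexmax (le : seq nat -> seq nat -> Prop) (C s : seq (seq nat)) : Prop :=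
  subseq C s /\ forall S, subseq S s -> lexle le S C.

(* The recursive definition of the preorder, with fuel k; the recursion of the
   paper is on (max symbol - min symbol) of AB, which strictly decreases. *)
Fixpoint wle_f (k : nat) (A B : seq nat) : Prop :=
  match k with
  | 0 => True
  | k'.+1 =>
      if A ++ B is [::] then True else
      let n := minsym (A ++ B) in
      exists C D, lexmax (wle_f k') C (splitn n A) /\
                  lexmax (wle_f k') D (splitn n B) /\
                  lexle (wle_f k') C D
  end.

Definition wle (A B : seq nat) : Prop :=
  wle_f (maxsym (A ++ B) - minsym (A ++ B)).+1 A B.

Definition wsim (A B : seq nat) : Prop := wle A B /\ wle B A.

(* Normal forms, fuel = size of the word (components are strictly shorter). *)
Fixpoint NF_f (k : nat) (A : seq nat) : Prop :=
  match k with
  | 0 => A = [::]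
  | k'.+1 =>
      if A is [::] then True else
      let cs := splitn (minsym A) A in
      (forall i, i.+1 < size cs -> wle (nth [::] cs i.+1) (nth [::] cs i)) /\
      (forall X, X \in cs -> NF_f k' X)
  end.

Definition NF (A : seq nat) : Prop := NF_f (size A) A.

(* D is ◇_n A, i.e. the (unique) NF word that is ~-equivalent to A n *)
Definition is_diamond (n : nat) (A D : seq nat) : Prop :=
  NF D /\ wsim D (a_ n A).

From mathcomp Require Import all_boot boolp zify.
Set Implicit Arguments. Unset Strict Implicit. Unset Printing Implicit Defensive.

(* Write A ≼ B for [wle]. For words whose symbols all lie in [m, M], comparing
   A with B amounts to comparing lexicographically the maximal subsequences of
   their m-components, so by downward induction on m the relation ≼ is a total
   preorder with the empty word least. For a total preorder the maximal
   subsequence is obtained greedily, keeping each component that dominates all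
   later ones; appending a component z therefore filters the old maximal
   subsequence down to the entries above z and then appends z. Appending a
   symbol n to A either appends the empty component (n = m), which only adds a
   least final entry, or replaces the last component X by Xn, where X ≼ Xn and,
   by induction on m, X ~ Y implies Xn ~ Yn. The claim about ◇_n is then
   transitivity of ≼, as ◇_n A₁ ~ A₁ n. *)

Notation word := (seq nat).

Lemma subseq_all (T : eqType) (a : pred T) (s1 s2 : seq T) :
  subseq s1 s2 -> all a s2 -> all a s1.
Proof. by move=> + /all_filterP s2E; rewrite -s2E subseq_filter => /andP[]. Qed.

Definition refl_on (R : word -> word -> Prop) (P : pred word) :=
  forall x, P x -> R x x.
Definition total_on (R : word -> word -> Prop) (P : pred word) :=
  forall x y, P x -> P y -> R x y \/ R y x.
Definition trans_on (R : word -> word -> Prop) (P : pred word) :=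
  forall x y z, P x -> P y -> P z -> R x y -> R y z -> R x z.
Definition total_preorder_on (R : word -> word -> Prop) (P : pred word) :=
  [/\ refl_on R P, total_on R P & trans_on R P].

Definition lexmax_le (R : word -> word -> Prop) (s t : seq word) :=
  exists C D, lexmax R C s /\ lexmax R D t /\ lexle R C D.

Section LexicographicOrder.

Variables (R : word -> word -> Prop) (P : pred word).
Hypotheses (Rrefl : refl_on R P) (Rtotal : total_on R P) (Rtrans : trans_on R P).

Lemma lexle_seq1 a b : lexle R [:: a] [:: b] <-> R a b.
Proof. by rewrite /=; split=> [[[]|[]]|ab] //; have [|] := pselect (R b a); tauto. Qed.

Lemma lexle_refl s : all P s -> lexle R s s.
Proof. by elim: s => //= a s IH /andP[Pa Ps]; right; split; [|split]; auto. Qed.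

Lemma lexle_cat s t : all P s -> lexle R s (s ++ t).
Proof. by elim: s => //= a s IH /andP[Pa Ps]; right; split; [|split]; auto. Qed.

Lemma lexle_trans s t u : all P s -> all P t -> all P u ->
  lexle R s t -> lexle R t u -> lexle R s u.
Proof.
elim: s t u => [|a s IH] [|b t] [|c u] //= /andP[Pa Ps] /andP[Pb Pt] /andP[Pc Pu].
have Tabc := Rtrans Pa Pb Pc.
case=> [[ab nba]|[ab [ba st]]] [[bc ncb]|[bc [cb tu]]].
- by left; split; [exact: Tabc|move=> ca; apply: ncb; exact: (Rtrans Pc Pa Pb)].
- by left; split; [exact: Tabc|move=> ca; apply: nba; exact: (Rtrans Pb Pc Pa)].
- by left; split; [exact: Tabc|move=> ca; apply: ncb; exact: (Rtrans Pc Pa Pb)].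
- right; split; first exact: Tabc.
  by split; [exact: (Rtrans Pc Pb Pa)|exact: (IH t u)].
Qed.

Lemma lexle_total s t : all P s -> all P t -> lexle R s t \/ lexle R t s.
Proof.
elim: s t => [|a s IH] [|b t] /=; try tauto.
move=> /andP[Pa Ps] /andP[Pb Pt].
have [ab|nab] := pselect (R a b); have [ba|nba] := pselect (R b a).
- by case: (IH t Ps Pt) => h; [left|right]; right.
- by left; left.
- by right; left.
- by case: (Rtotal Pa Pb).
Qed.

Fixpoint lexeq (s t : seq word) : Prop :=
  match s, t with
  | [::], [::] => True
  | a :: s', b :: t' => [/\ R a b, R b a & lexeq s' t']
  | _, _ => False
  end.

Lemma lexle_anti s t : lexle R s t -> lexle R t s -> lexeq s t.
Proof.
elim: s t => [|a s IH] [|b t] //=.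
by case=> [[ab nba]|[ab [ba st]]] [[ba' nab]|[ba' [ab' ts]]] //; split; auto.
Qed.

Lemma lexeq_lexle s t : lexeq s t -> lexle R s t.
Proof. by elim: s t => [|a s IH] [|b t] //= [ab ba e]; right; auto. Qed.

Lemma lexeq_sym s t : lexeq s t -> lexeq t s.
Proof. by elim: s t => [|a s IH] [|b t] //= [ab ba e]; split; auto. Qed.

Lemma lexeq_rcons s t a b :
  lexeq (rcons s a) (rcons t b) <-> [/\ lexeq s t, R a b & R b a].
Proof.
elim: s t => [|c s IH] [|d t] /=.
- by split=> [[]|[]].
- by case: t => [|? ?]; split=> [[]|[]].
- by case: s {IH} => [|? ?]; split=> [[]|[]].
- split=> [[? ? /IH[? ? ?]]|[[? ? ?] ? ?]]; do ?split=> //.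
  exact/IH.
Qed.

Definition upper z (L : seq word) := [seq c <- L | `[< R z c >]].

Fixpoint lexmax_of (s : seq word) : seq word :=
  if s is x :: s' then
    if all (fun y => `[< R y x >]) s' then x :: lexmax_of s' else lexmax_of s'
  else [::].

Lemma lexmax_of_subseq s : subseq (lexmax_of s) s.
Proof.
elim: s => //= x s IH; case: ifP => _; first by rewrite eqxx.
exact: subseq_trans IH (subseq_cons s x).
Qed.

Lemma all_lexmax_of s : all P s -> all P (lexmax_of s).
Proof. exact: subseq_all (lexmax_of_subseq s). Qed.

Lemma lexmax_of_rcons s z : lexmax_of (rcons s z) = rcons (upper z (lexmax_of s)) z.
Proof.
elim: s => //= x s IH; rewrite all_rcons IH.
by case Hz: `[< R z x >]; case: (all _ s); rewrite /= ?Hz.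
Qed.

Lemma lexmax_of_head_max s : all P s -> s != [::] ->
  exists g t, [/\ lexmax_of s = g :: t, g \in s & forall y, y \in s -> R y g].
Proof.
elim: s => //= x s IH /andP[Px Ps] _.
case: ifP => dom.
  exists x, (lexmax_of s); split; rewrite ?mem_head //.
  move=> y; rewrite inE => /predU1P[->|ys]; first exact: Rrefl.
  by move/allP: dom => /(_ y ys) /asboolP.
have [w ws /asboolP nwx] : exists2 w, w \in s & ~~ `[< R w x >].
  by apply/allPn; rewrite dom.
have s_nil : s != [::] by case: (s) ws.
have [g [t [E gs Hg]]] := IH Ps s_nil.
exists g, t; split; rewrite ?inE ?gs ?orbT //.
move=> y; rewrite inE => /predU1P[->|]; last exact: Hg.
have Pw : P w := allP Ps w ws; have Pg : P g := allP Ps g gs.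
have xw : R x w by case: (Rtotal Px Pw).
exact: (Rtrans Px Pw Pg xw (Hg w ws)).
Qed.

Lemma lexmax_ofP s : all P s -> lexmax R (lexmax_of s) s.
Proof.
move=> Ps; split; first exact: lexmax_of_subseq.
elim: s Ps => [_ [] //|x s IH /[dup] Pxs /andP[Px Ps] [//|y S]].
have [->|nyx] := eqVneq y x; rewrite [subseq _ _]/= ?eqxx ?(negbTE nyx) => sub;
  rewrite [lexmax_of _]/=; case: ifP => dom.
- by right; split; [exact: Rrefl|split; [exact: Rrefl|exact: IH]].
- have [w ws /asboolP nwx] : exists2 w, w \in s & ~~ `[< R w x >].
    by apply/allPn; rewrite dom.
  have [g [t [E gs Hg]]] := lexmax_of_head_max Pxs (isT : x :: s != [::]).
  rewrite /= dom in E; rewrite E.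
  have Pw : P w := allP Ps w ws; have Pg : P g := allP Pxs g gs.
  left; split; first by apply: Hg; rewrite mem_head.
  by move=> gx; apply: nwx; apply: (Rtrans Pw Pg Px _ gx); apply: Hg; rewrite inE ws orbT.
- have ys : y \in s := mem_subseq sub (mem_head _ _).
  have yx : R y x by move/allP: dom => /(_ y ys) /asboolP.
  have [xy|nxy] := pselect (R x y); last by left.
  by right; split=> //; split=> //; apply: IH => //; exact: subseq_trans (subseq_cons S y) sub.
- exact: IH.
Qed.

Lemma lexmax_leE s t : all P s -> all P t ->
  lexmax_le R s t <-> lexle R (lexmax_of s) (lexmax_of t).
Proof.
move=> Ps Pt; have Ms := lexmax_ofP Ps; have Mt := lexmax_ofP Pt.
have PMs := all_lexmax_of Ps; have PMt := all_lexmax_of Pt.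
split=> [[C [D [[subC maxC] [[subD maxD] CD]]]]|]; last by exists (lexmax_of s), (lexmax_of t).
have PC := subseq_all subC Ps; have PD := subseq_all subD Pt.
have CMt : lexle R C (lexmax_of t) := lexle_trans PC PD PMt CD (Mt.2 _ subD).
exact: lexle_trans PMs PC PMt (maxC _ Ms.1) CMt.
Qed.

Lemma upper_id z L : (forall c, c \in L -> R z c) -> upper z L = L.
Proof. by move=> zL; apply/all_filterP/allP => c /zL /asboolP. Qed.

Lemma upper_upper L x y : all P L -> P x -> P y -> R x y ->
  upper y L = upper y (upper x L).
Proof.
move=> PL Px Py xy; rewrite /upper -filter_predI; apply: eq_in_filter => c cL /=.
have Pc := allP PL c cL.
by case: (asboolP (R y c)) => //= yc; apply/esym/asboolP; exact: (Rtrans Px Py Pc).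
Qed.

Lemma lexeq_upper L L' z z' : all P L -> all P L' -> P z -> P z' ->
  lexeq L L' -> R z z' -> R z' z -> lexeq (upper z L) (upper z' L').
Proof.
elim: L L' => [|a L IH] [|b L'] //= /andP[Pa PL] /andP[Pb PL'] Pz Pz' [ab ba e] zz' z'z.
have -> : `[< R z a >] = `[< R z' b >].
  apply/asboolP/asboolP => h.
    exact: (Rtrans Pz' Pz Pb z'z (Rtrans Pz Pa Pb h ab)).
  exact: (Rtrans Pz Pz' Pa zz' (Rtrans Pz' Pb Pa h ba)).
by case: ifP => _ /=; [split|]; auto.
Qed.

Lemma lexle_upper_rcons L x y : all P L -> P x -> P y -> R x y ->
  lexle R (rcons (upper x L) x) (rcons (upper y L) y).
Proof.
elim: L => [|c L IH] /=.
  by move=> _ Px Py xy; have [yx|nyx] := pselect (R y x); [right|left].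
move=> /andP[Pc PL] Px Py xy.
case: (asboolP (R y c)) => yc.
  have -> /= : `[< R x c >] by apply/asboolP; exact: (Rtrans Px Py Pc).
  by right; split; [exact: Rrefl|split; [exact: Rrefl|exact: IH]].
case: (asboolP (R x c)) => xc /=; last exact: IH.
have cy : R c y by case: (Rtotal Pc Py).
have [h [t [E Ph yh]]] : exists h t, [/\ rcons (upper y L) y = h :: t, P h & R y h].
  case E: (upper y L) => [|h t] /=; first by exists y, [::]; split=> //; exact: Rrefl.
  have : h \in upper y L by rewrite E mem_head.
  rewrite mem_filter => /andP[/asboolP yh hL].
  by exists h, (rcons t y); split=> //; exact: (allP PL).
rewrite E; left; split; first exact: (Rtrans Pc Py Ph).
by move=> hc; apply: yc; exact: (Rtrans Py Ph Pc).
Qed.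

End LexicographicOrder.

Definition eq_rel_on (R1 R2 : word -> word -> Prop) (P : pred word) :=
  forall x y, P x -> P y -> (R1 x y <-> R2 x y).

Section RelationExtensionality.

Variables (R1 R2 : word -> word -> Prop) (P : pred word).
Hypothesis R12 : eq_rel_on R1 R2 P.

Lemma eq_lexle_on s t : all P s -> all P t -> lexle R1 s t <-> lexle R2 s t.
Proof.
elim: s t => [|a s IH] [|b t] //= /andP[Pa Ps] /andP[Pb Pt].
by rewrite (R12 Pa Pb) (R12 Pb Pa) (IH t Ps Pt).
Qed.

Lemma eq_lexmax_on C s : all P s -> lexmax R1 C s <-> lexmax R2 C s.
Proof.
move=> Ps; split=> -[sub maxC]; split=> // S subS; have PS := subseq_all subS Ps.
  by rewrite -(eq_lexle_on PS (subseq_all sub Ps)); exact: maxC.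
by rewrite (eq_lexle_on PS (subseq_all sub Ps)); exact: maxC.
Qed.

Lemma eq_lexmax_le_on s t : all P s -> all P t -> lexmax_le R1 s t <-> lexmax_le R2 s t.
Proof.
move=> Ps Pt; split=> -[C [D [maxC [maxD CD]]]]; exists C, D;
  have PC := subseq_all maxC.1 Ps; have PD := subseq_all maxD.1 Pt;
  by split; [apply/(eq_lexmax_on _ Ps)|split; [apply/(eq_lexmax_on _ Pt)|apply/(eq_lexle_on PC PD)]].
Qed.

End RelationExtensionality.

Definition within m M (A : word) := all (fun x => m <= x <= M) A.

Lemma within_cat m M A B : within m M (A ++ B) = within m M A && within m M B.
Proof. exact: all_cat. Qed.

Lemma within_rcons m M A n : within m M A -> m <= n <= M -> within m M (rcons A n).
Proof. by rewrite /within all_rcons => -> ->. Qed.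

Lemma within_nil m M A : M < m -> within m M A -> A = [::].
Proof. by case: A => //= x A Mm /andP[/andP[mx xM]]; move: (leq_trans mx xM); rewrite leqNgt Mm. Qed.

Lemma minsym_le s x : x \in s -> minsym s <= x.
Proof.
rewrite /minsym; move: (head 0 s) => x0.
elim: s => //= a s IH; rewrite inE => /predU1P[->|/IH]; first exact: geq_minl.
exact: leq_trans (geq_minr _ _).
Qed.

Lemma minsym_mem s : s != [::] -> minsym s \in s.
Proof.
case: s => // x s _; rewrite /minsym /=.
suff : foldr minn x s \in x :: s by rewrite /minn; case: ifP; rewrite ?mem_head.
elim: s => [|a s IH] /=; first exact: mem_head.
rewrite /minn; case: ifP => _; first by rewrite !inE eqxx orbT.
by move: IH; rewrite !inE => /orP[->|->]; rewrite ?orbT.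
Qed.

Lemma maxsym_ge s x : x \in s -> x <= maxsym s.
Proof.
rewrite /maxsym; elim: s => //= a s IH; rewrite inE => /predU1P[->|/IH]; first exact: leq_maxl.
by move/leq_trans; apply; exact: leq_maxr.
Qed.

Lemma within_minsym_maxsym s A : {subset A <= s} -> within (minsym s) (maxsym s) A.
Proof. by move=> sub; apply/allP => x /sub xs; rewrite minsym_le ?maxsym_ge. Qed.

Lemma within_minsym m M s : within m M s -> within (minsym s) M s.
Proof. by move=> /allP Hs; apply/allP => x xs; rewrite minsym_le //; case/andP: (Hs x xs). Qed.

Lemma le_minsym m M s : s != [::] -> within m M s -> m <= minsym s.
Proof. by move=> /minsym_mem sm /allP /(_ _ sm) /andP[]. Qed.

Lemma splitn_cons n a A : splitn n (a :: A) =
  if a == n then [::] :: splitn n A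
  else if splitn n A is h :: t then (a :: h) :: t else [:: [:: a]].
Proof. by []. Qed.

Lemma splitn_nonnil n A : exists h t, splitn n A = h :: t.
Proof.
elim: A => [|a A [h [t IH]]]; first by exists [::], [::].
by rewrite splitn_cons IH; case: ifP; eauto.
Qed.

Lemma splitn_notin n A : n \notin A -> splitn n A = [:: A].
Proof.
elim: A => // a A IH; rewrite inE negb_or => /andP[na nA].
by rewrite splitn_cons IH // eq_sym (negbTE na).
Qed.

Lemma splitn_rcons_eq n A : splitn n (rcons A n) = rcons (splitn n A) [::].
Proof.
elim: A => [|a A IH]; first by rewrite /= eqxx.
rewrite rcons_cons !splitn_cons IH; case: ifP => // _.
by have [h [t ->]] := splitn_nonnil n A.
Qed.

Lemma splitn_rcons_neq n k A : k != n ->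
  exists i x, splitn n A = rcons i x /\ splitn n (rcons A k) = rcons i (rcons x k).
Proof.
move=> kn; elim: A => [|a A [i [x [E1 E2]]]].
  by exists [::], [::]; rewrite /= (negbTE kn).
rewrite rcons_cons !splitn_cons E1 E2; case: ifP => _; first by exists ([::] :: i), x.
by case: i {E1 E2} => [|h t] /=; [exists [::], (a :: x)|exists ((a :: h) :: t), x].
Qed.

Lemma splitn_within m M A : within m M A -> all (within m.+1 M) (splitn m A).
Proof.
elim: A => [//|a A IH] /andP[/andP[ma aM] /IH].
rewrite splitn_cons; case: eqP => [//|am].
have [h [t ->]] := splitn_nonnil m A; rewrite /= => /andP[-> ->].
by rewrite aM !andbT ltn_neqAle ma andbT; apply/eqP => /esym.
Qed.

Lemma wle_f_succ k m M A B : within m M (A ++ B) -> M < m + k ->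
  wle_f k A B <-> wle_f k.+1 A B.
Proof.
elim: k m M A B => [|k IH] m M A B HAB HM.
  by rewrite addn0 in HM; rewrite /= (within_nil HM HAB).
rewrite [wle_f k.+1 A B]/= [wle_f k.+2 A B]/=.
case AB: (A ++ B) => [//|a l]; rewrite -AB.
have ne : A ++ B != [::] by rewrite AB.
set n := minsym (A ++ B).
have HABn : within n M (A ++ B) := within_minsym HAB.
have mn : m <= n := le_minsym ne HAB.
move: HABn; rewrite within_cat => /andP[HA HB].
have R12 : eq_rel_on (wle_f k) (wle_f k.+1) (within n.+1 M).
  move=> X Y HX HY; apply: (IH n.+1 M); first by rewrite within_cat HX HY.
  by rewrite addSnnS; apply: leq_trans HM _; rewrite leq_add2r.
exact: (eq_lexmax_le_on R12 (splitn_within HA) (splitn_within HB)).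
Qed.

Lemma wle_f_add k j m M A B : within m M (A ++ B) -> M < m + k ->
  wle_f k A B <-> wle_f (k + j) A B.
Proof.
move=> HAB HM; elim: j => [|j IH]; first by rewrite addn0.
by rewrite IH addnS; apply: (wle_f_succ HAB); apply: leq_trans HM _; rewrite leq_add2l leq_addr.
Qed.

Lemma wle_fE k m M A B : within m M (A ++ B) -> M < m + k -> wle_f k A B <-> wle A B.
Proof.
move=> HAB HM; rewrite /wle.
set m0 := minsym (A ++ B); set M0 := maxsym (A ++ B); set k0 := (M0 - m0).+1.
have HAB0 : within m0 M0 (A ++ B) by exact: within_minsym_maxsym.
have HM0 : M0 < m0 + k0 by rewrite /k0; lia.
rewrite (wle_f_add (maxn k k0 - k) HAB HM) (wle_f_add (maxn k k0 - k0) HAB0 HM0).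
by rewrite !subnKC ?leq_maxl ?leq_maxr.
Qed.

Lemma wleE A B : A ++ B != [::] ->
  wle A B <-> lexmax_le wle (splitn (minsym (A ++ B)) A) (splitn (minsym (A ++ B)) B).
Proof.
move=> ne; rewrite {1}/wle.
set m0 := minsym (A ++ B); set M0 := maxsym (A ++ B).
have HAB0 : within m0 M0 (A ++ B) by exact: within_minsym_maxsym.
have m0M0 : m0 <= M0 by rewrite maxsym_ge // minsym_mem.
move: (HAB0); rewrite within_cat => /andP[HA HB].
have R12 : eq_rel_on (wle_f (M0 - m0)) wle (within m0.+1 M0).
  by move=> X Y HX HY; apply: (wle_fE (m := m0.+1) (M := M0)); rewrite ?within_cat ?HX ?HY //; lia.
rewrite -(eq_lexmax_le_on R12 (splitn_within HA) (splitn_within HB)) /=.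
have [a [l AB]] : exists a l, A ++ B = a :: l by case: (A ++ B) ne; eauto.
by rewrite {1}AB.
Qed.

Lemma wle_splitnE m M A B : total_preorder_on wle (within m.+1 M) ->
    within m M A -> within m M B ->
  wle A B <-> lexle wle (lexmax_of wle (splitn m A)) (lexmax_of wle (splitn m B)).
Proof.
move=> [Hr Hto Htr] HA HB; have HAB : within m M (A ++ B) by rewrite within_cat HA HB.
have [AB0|ne] := eqVneq (A ++ B) [::].
  by case: A AB0 {HA HAB} => //; case: B {HB} => // _; split=> // _; right.
have [lt|m_min] : m < minsym (A ++ B) \/ m = minsym (A ++ B).
  by rewrite ltn_neqAle (le_minsym ne HAB) andbT; case: eqP; [right|left].
- have : m \notin A ++ B by apply/negP => /minsym_le; rewrite leqNgt lt.
  rewrite mem_cat negb_or => /andP[nA nB].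
  rewrite (splitn_notin nA) (splitn_notin nB).
  exact: iff_sym (lexle_seq1 _ A B).
- rewrite wleE // -m_min.
  exact (lexmax_leE Hr Hto Htr (splitn_within HA) (splitn_within HB)).
Qed.

Lemma range_ind (M : nat) (P : nat -> Prop) :
  (forall m, M < m -> P m) -> (forall m, P m.+1 -> P m) -> forall m, P m.
Proof.
move=> base step m; suff H k : forall m, M < m + k -> P m.
  by apply: (H M.+1); rewrite addnS ltnS leq_addl.
elim: k => [|k IH] {}m; first by rewrite addn0; exact: base.
by move=> lt; apply/step/IH; rewrite addSnnS.
Qed.

Lemma wle_preorder m M : total_preorder_on wle (within m M).
Proof.
elim/(range_ind (M := M)): m => [m Mm|m Q1].
  have nil X : within m M X -> X = [::] := within_nil Mm.
  by split=> [X /nil ->|X Y /nil -> /nil ->|X Y Z /nil -> /nil -> /nil ->]; try left.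
have [Hr Hto Htr] := Q1.
have P1 X : within m M X -> all (within m.+1 M) (lexmax_of wle (splitn m X)).
  by move=> HX; apply/all_lexmax_of/splitn_within.
have E X Y : within m M X -> within m M Y -> wle X Y <->
    lexle wle (lexmax_of wle (splitn m X)) (lexmax_of wle (splitn m Y)).
  exact: wle_splitnE.
split=> [X HX|X Y HX HY|X Y Z HX HY HZ].
- rewrite E //; exact (lexle_refl Hr (P1 X HX)).
- rewrite !E //; exact (lexle_total Hto (P1 X HX) (P1 Y HY)).
- rewrite !E //; exact (lexle_trans Htr (P1 X HX) (P1 Y HY) (P1 Z HZ)).
Qed.

Lemma within_maxsym s A : {subset A <= s} -> within 0 (maxsym s) A.
Proof. by move=> sub; apply/allP => x /sub xs; rewrite leq0n maxsym_ge. Qed.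

Lemma nil_wle A : wle [::] A.
Proof.
suff H m : forall X, within m (maxsym A) X -> wle [::] X by apply/(H 0)/within_maxsym.
elim/(range_ind (M := maxsym A)): m => [m Mm X /(within_nil Mm) -> //|m IH X HX].
have Q1 := wle_preorder m.+1 (maxsym A); have [Hr Hto Htr] := Q1.
rewrite (wle_splitnE Q1 (isT : within m _ [::]) HX).
have ne : splitn m X != [::] by have [h [u ->]] := splitn_nonnil m X.
have [g [t [-> gX _]]] := lexmax_of_head_max Hr Hto Htr (splitn_within HX) ne.
have ng : wle [::] g by apply/IH/(allP (splitn_within HX)).
by have [gn|ngn] := pselect (wle g [::]); [right|left].
Qed.

Lemma wle_rcons A n : wle A (rcons A n).
Proof.
set M := maxsym (n :: A); have nM : n <= M by rewrite maxsym_ge ?mem_head.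
suff H m : forall X, within m M X -> m <= n -> wle X (rcons X n).
  by apply: (H 0) => //; apply: within_maxsym => x xA; rewrite inE xA orbT.
elim/(range_ind (M := M)): m => [m Mm|m IH] X HX mn.
  by move: (leq_trans mn nM); rewrite leqNgt Mm.
have Q1 := wle_preorder m.+1 M; have [Hr Hto Htr] := Q1.
rewrite (wle_splitnE Q1 HX (within_rcons HX _)) ?mn //.
have [->|nm] := eqVneq n m.
  rewrite splitn_rcons_eq lexmax_of_rcons upper_id => [|c _]; last exact: nil_wle.
  by rewrite -cats1; exact (lexle_cat Hr [:: [::]] (all_lexmax_of wle (splitn_within HX))).
have [i [x [EX EXn]]] := splitn_rcons_neq X nm.
have := splitn_within HX; rewrite EX EXn !lexmax_of_rcons all_rcons => /andP[Hx Hi].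
have mn1 : m < n by rewrite ltn_neqAle mn eq_sym nm.
have Hxn : within m.+1 M (rcons x n) by rewrite within_rcons ?mn1.
exact (lexle_upper_rcons Hr Hto Htr (all_lexmax_of wle Hi) Hx Hxn (IH x Hx mn1)).
Qed.

Lemma wsim_rcons A B n : wsim A B -> wsim (rcons A n) (rcons B n).
Proof.
set M := maxsym (n :: A ++ B); have nM : n <= M by rewrite maxsym_ge ?mem_head.
suff H m : forall X Y, within m M X -> within m M Y -> m <= n ->
    wsim X Y -> wsim (rcons X n) (rcons Y n).
  by apply: (H 0) => //; apply: within_maxsym => x xAB; rewrite inE mem_cat xAB ?orbT.
elim/(range_ind (M := M)): m => [m Mm|m IH] X Y HX HY mn.
  by move: (leq_trans mn nM); rewrite leqNgt Mm.
have Q1 := wle_preorder m.+1 M; have [Hr Hto Htr] := Q1.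
have [HXn HYn] : within m M (rcons X n) /\ within m M (rcons Y n).
  by rewrite !within_rcons ?mn.
rewrite /wsim (wle_splitnE Q1 HX HY) (wle_splitnE Q1 HY HX).
rewrite (wle_splitnE Q1 HXn HYn) (wle_splitnE Q1 HYn HXn) => -[XY YX].
have GX := all_lexmax_of wle (splitn_within HX); have GY := all_lexmax_of wle (splitn_within HY).
have [->|nm] := eqVneq n m.
  have up L : upper wle [::] L = L by apply: upper_id => c _; exact: nil_wle.
  rewrite !splitn_rcons_eq !lexmax_of_rcons !up.
  have e : lexeq wle (rcons (lexmax_of wle (splitn m X)) [::]) (rcons (lexmax_of wle (splitn m Y)) [::]).
    by apply/lexeq_rcons; split=> //; exact: lexle_anti.
  by split; apply: lexeq_lexle; [|apply: lexeq_sym].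
have [i [x [EX EXn]]] := splitn_rcons_neq X nm; have [j [y [EY EYn]]] := splitn_rcons_neq Y nm.
have := splitn_within HX; rewrite EX all_rcons => /andP[Hx /(all_lexmax_of wle) Gi].
have := splitn_within HY; rewrite EY all_rcons => /andP[Hy /(all_lexmax_of wle) Gj].
move: XY YX GX GY; rewrite EX EXn EY EYn !lexmax_of_rcons !all_rcons.
move=> XY YX /andP[_ Ui] /andP[_ Uj].
have mn1 : m < n by rewrite ltn_neqAle mn andbT eq_sym.
have [Hxn Hyn] : within m.+1 M (rcons x n) /\ within m.+1 M (rcons y n).
  by rewrite !within_rcons ?mn1.
have /lexeq_rcons[e xy yx] := lexle_anti XY YX.
have [xyn yxn] := IH x y Hx Hy mn1 (conj xy yx).
(* As x ≼ xn, filtering by xn subsumes filtering by x. *)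
rewrite (upper_upper Htr Gi Hx Hxn (wle_rcons x n)) (upper_upper Htr Gj Hy Hyn (wle_rcons y n)).
have e' : lexeq wle (rcons (upper wle (rcons x n) (upper wle x (lexmax_of wle i))) (rcons x n))
                    (rcons (upper wle (rcons y n) (upper wle y (lexmax_of wle j))) (rcons y n)).
  by apply/lexeq_rcons; split=> //; exact (lexeq_upper Htr Ui Uj Hxn Hyn e xyn yxn).
by split; apply: lexeq_lexle; [|apply: lexeq_sym].
Qed.

Lemma wle_trans A B C : wle A B -> wle B C -> wle A C.
Proof.
have [_ _ Htr] := wle_preorder 0 (maxsym (A ++ B ++ C)).
by apply: Htr; apply: within_maxsym => x xX; rewrite !mem_cat xX ?orbT.
Qed.

Theorem proposition1 :
  (forall (n : nat) (A1 A2 : seq nat), wsim A1 A2 -> wsim (a_ n A1) (a_ n A2)) /\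
  (forall (n : nat) (A1 A2 : seq nat), NF A1 -> wsim A1 A2 ->
     forall D : seq nat, is_diamond n A1 D -> wsim D (a_ n A2)).
Proof.
split=> [n A1 A2|n A1 A2 _ A12 D [_ [DA1 A1D]]]; first exact: wsim_rcons.
have [A1A2 A2A1] := wsim_rcons n A12.
by split; [exact: wle_trans A1A2|exact: wle_trans A1D].
Qed.
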